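(* Let $\zeta\in\overline{\mathbb D}$ and $f\in\mathcal D_\zeta$, $f(z)=\sum_{k=0}^\infty a_kz^k$. Then $\sum_{k=0}^\infty a_k\zeta^k$ converges, and, setting $$f_n(z):=\sum_{k=0}^{n-1}a_kz^k+\Bigl(\sum_{k=n}^\infty a_k\zeta^{k-n}\Bigr)z^n,$$ we have $\mathcal D_\zeta(f-f_n)\to0$ as $n\to\infty$.
   Context: $\mathbb D$ is the open unit disk, $\mathrm{Hol}(\mathbb D)$ the holomorphic functions on $\mathbb D$, and $H^2$ the Hardy space with $\|\sum b_kz^k\|_{H^2}^2=\sum|b_k|^2$. For $\zeta\in\overline{\mathbb D}$, $\mathcal D_\zeta$ is the set of $f\in\mathrm{Hol}(\mathbb D)$ of the form $f(z)=a+(z-\zeta)g(z)$ with $g\in H^2$, $a\in\mathbb C$; for such $f$ set $\mathcal D_\zeta(f):=\|g\|_{H^2}^2$, and set $\mathcal D_\zeta(f):=\infty$ if $f\notin\mathcal D_\zeta$. *)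

From HB Require Import structures.
From mathcomp Require Import all_boot all_order all_algebra.
From mathcomp Require Import all_classical all_reals all_analysis.
From mathcomp Require Import complex.
Set Implicit Arguments.
Unset Strict Implicit.
Unset Printing Implicit Defensive.
Import Order.TTheory GRing.Theory Num.Theory.
Import numFieldNormedType.Exports.
Local Open Scope classical_set_scope.
Local Open Scope ring_scope.

Section Defs.
Variable R : realType.
Local Notation C := (R[i])^o.

Definition sqmod (z : C) : R := (complex.Re z) ^+ 2 + (complex.Im z) ^+ 2.

Definition H2coef (b : nat -> C) : Prop :=
  (\sum_(0 <= k <oo) ((sqmod (b k))%:E) < +oo)%E.

(** f(z) = a + (z - zeta) g(z) on the open unit disk, where
    g(z) = sum_k b_k z^k with (b_k) square-summable (i.e. g in H^2). *)
Definition Drep (zeta : C) (f : C -> C) (a : C) (b : nat -> C) : Prop :=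
  H2coef b /\
  forall z : C, `|z| < 1 ->
    exists w : C, series (fun k => b k * z ^+ k) @ \oo --> w /\
                  f z = a + (z - zeta) * w.

Definition in_Dzeta (zeta : C) (f : C -> C) : Prop :=
  exists a b, Drep zeta f a b.

(** The representation is unique when |zeta| <= 1, so the infimum below is
    exactly ||g||^2; the infimum of the empty set is +oo. *)
Definition Dzeta (zeta : C) (f : C -> C) : \bar R :=
  ereal_inf [set (\sum_(0 <= k <oo) ((sqmod (b k))%:E))%E
            | b in [set b | exists a, Drep zeta f a b]].

Definition tailsum (a : nat -> C) (zeta : C) (n : nat) : C :=
  lim (series (fun j => a (n + j)%N * zeta ^+ j) @ \oo).

Definition fn (a : nat -> C) (zeta : C) (n : nat) (z : C) : C :=
  \sum_(k < n) a k * z ^+ k + tailsum a zeta n * z ^+ n.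

End Defs.

(** Write f = c + (z - zeta) g with g = sum b_k z^k, (b_k) square summable.
    Uniqueness of power series coefficients on the disk gives
    a_k = b_(k-1) - zeta b_k (with b_(-1) := c).  As b_k -> 0 and |zeta| <= 1,
    the series sum_(k >= n) a_k zeta^(k-n) telescopes to b_(n-1), so that
    f - f_n = (z - zeta) sum_(k >= n) b_k z^k and
    D_zeta(f - f_n) <= sum_(k >= n) |b_k|^2, a tail of a convergent series. *)

From HB Require Import structures.
From mathcomp Require Import all_boot all_order all_algebra.
From mathcomp Require Import all_classical all_reals all_analysis.
From mathcomp Require Import complex.
From mathcomp Require Import ring.
Import Order.TTheory GRing.Theory Num.Theory.
Import numFieldNormedType.Exports.
Local Open Scope classical_set_scope.
Local Open Scope ring_scope.

Section NumFieldPowerSeries.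
Variable F : numFieldType.

Lemma sumr_geometric_le (s : F) m N : 0 <= s -> s <= 2^-1 ->
  \sum_(m <= k < N) s ^+ k <= 2 * s ^+ m.
Proof.
move=> s0 s_le_half.
have [mN|Nm] := leqP m N; last first.
  rewrite big_geq; last exact: ltnW.
  by apply: mulr_ge0; [exact: ler0n | exact: exprn_ge0].
have scaled_sum : (1 - s) * \sum_(m <= k < N) s ^+ k = s ^+ m - s ^+ N.
  have telescope := telescope_sumr (fun k => s ^+ k) mN; rewrite /= in telescope.
  rewrite -[s ^+ m - _]opprB -telescope mulr_sumr -sumrN.
  by apply: eq_bigr => k _; rewrite exprS mulrBl mul1r opprB.
have half_le : 2^-1 <= 1 - s.
  by apply: le_trans (lerB (lexx 1) s_le_half); rewrite [X in _ <= X - _]splitr mul1r addrK.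
rewrite -(@ler_pM2l _ (2^-1)) ?invr_gt0 ?ltr0n // mulrA mulVf ?pnatr_eq0 // mul1r.
apply: le_trans (ler_wpM2r (sumr_ge0 _ (fun k _ => exprn_ge0 k s0)) half_le) _.
by rewrite scaled_sum gerBl exprn_ge0.
Qed.

Lemma norm_sumr_powser_le (d : nat -> F) (K t : F) m N :
  (forall k, `|d k| <= K * 2 ^+ k) -> 0 <= t -> t <= 4^-1 ->
  `|\sum_(m <= k < N) d k * t ^+ k| <= 2 * K * (2 * t) ^+ m.
Proof.
move=> dK t0 t_small.
have K0 : 0 <= K by have := le_trans (normr_ge0 _) (dK 0%N); rewrite expr0 mulr1.
have term k : `|d k * t ^+ k| <= K * (2 * t) ^+ k.
  by rewrite normrM normrX (ger0_norm t0) exprMn mulrA ler_wpM2r ?exprn_ge0.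
apply: le_trans (ler_norm_sum _ _ _) _.
apply: le_trans (ler_sum_nat (fun k _ => term k)) _.
rewrite -mulr_sumr [2 * K]mulrC -mulrA ler_wpM2l //.
apply: sumr_geometric_le; first by rewrite mulr_ge0 ?ler0n.
apply: le_trans (ler_wpM2l (ler0n _ 2) t_small) _.
by rewrite (_ : 2 * 4^-1 = 2^-1 :> F) //; field.
Qed.

Lemma small_linear_ler0 (x c : F) : 0 <= c ->
  (forall t, 0 < t -> t <= 4^-1 -> x <= c * t) -> x <= 0.
Proof.
move=> c0 small; apply/ler_addgt0Pr => e e0; rewrite add0r.
have ce0 : 0 < c + e by rewrite ltr_wpDl.
set t := 4^-1 * (e / (c + e)).
have t0 : 0 < t by rewrite !mulr_gt0 ?invr_gt0 ?ltr0n.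
have t_small : t <= 4^-1.
  by rewrite ler_piMr ?invr_ge0 ?ler0n // ler_pdivrMr // mul1r lerDr.
apply: le_trans (small t t0 t_small) _.
apply: le_trans (_ : c * t <= (c + e) * t) _.
  by apply: ler_wpM2r; rewrite ?lerDl ltW.
rewrite (_ : (c + e) * t = 4^-1 * e); last by rewrite /t; field; rewrite gt_eqF.
by apply: ler_piMl; [exact: ltW | rewrite invf_le1 ?ltr0n ?ler1n].
Qed.

Lemma powser_coef_bound {d : nat -> F} :
  cvgn (series (fun k => d k * 2^-1 ^+ k)) -> exists K, forall k, `|d k| <= K * 2 ^+ k.
Proof.
move=> /cvg_series_cvg_0 terms0.
have [M _ dM] := ex_strict_bound_gt0 (cvg_seq_bounded (cvgP _ terms0)).
exists M => k; have := ltW (dM k I); rewrite /= normrM normrX.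
by rewrite normfV normr_nat exprVn ler_pdivrMr ?exprn_gt0 ?ltr0n.
Qed.

(* Induction on the first nonzero coefficient d_m: for small t > 0 the sum
   is d_m t^m + O(t^(m+1)). *)
Lemma powser_coef_eq0 (d : nat -> F) :
  (forall z : F, `|z| < 1 -> series (fun k => d k * z ^+ k) @ \oo --> 0) ->
  forall k, d k = 0.
Proof.
move=> vanish.
have half_lt1 : `|2^-1 : F| < 1 by rewrite normfV normr_nat invf_lt1 ?ltr0n ?ltr1n.
have [K dK] := powser_coef_bound (cvgP _ (vanish _ half_lt1)).
have K0 : 0 <= K by have := le_trans (normr_ge0 _) (dK 0%N); rewrite expr0 mulr1.
elim/ltn_ind => m IHm; apply/eqP; rewrite -normr_le0.
apply: (@small_linear_ler0 _ (2 ^+ m.+2 * K)); first by rewrite mulr_ge0 ?exprn_ge0 ?ler0n.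
move=> t t0 t_small.
have t_lt1 : `|t| < 1.
  rewrite ger0_norm ?ltW //; apply: le_lt_trans t_small _.
  by rewrite invf_lt1 ?ltr0n ?ltr1n.
have leading : `|d m * t ^+ m| <= 2 * K * (2 * t) ^+ m.+1.
  apply/ler_addgt0Pr => e e0.
  have /cvgr0Pnorm_lt/(_ e e0) [N0 _ small_sum] := vanish t t_lt1.
  pose N := maxn N0 m.+1.
  have split_sum : series (fun k => d k * t ^+ k) N =
      d m * t ^+ m + \sum_(m.+1 <= k < N) d k * t ^+ k.
    rewrite /series /= (big_cat_nat (leq0n m.+1) (leq_maxr _ _)) big_nat_recr //=.
    by rewrite big_mkord big1 ?add0r // => i _; rewrite IHm ?mul0r.
  rewrite -[d m * _](addrK (\sum_(m.+1 <= k < N) d k * t ^+ k)) -split_sum addrC.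
  apply: le_trans (ler_normD _ _) _; rewrite normrN; apply: lerD.
    exact: norm_sumr_powser_le dK (ltW t0) t_small.
  exact: ltW (small_sum N (leq_maxl _ _)).
rewrite -(@ler_pM2r _ (t ^+ m)) ?exprn_gt0 //.
rewrite normrM normrX (ger0_norm (ltW t0)) in leading.
rewrite (_ : 2 ^+ m.+2 * K * t * t ^+ m = 2 * K * (2 * t) ^+ m.+1) //.
by rewrite !exprS exprMn; ring.
Qed.

Lemma cvg0_mul_norm_le1 (u v : nat -> F) :
  u @ \oo --> 0 -> (forall n, `|v n| <= 1) -> (fun n => u n * v n) @ \oo --> 0.
Proof.
move=> /cvgr0Pnorm_lt u0 v1; apply/cvgr0Pnorm_lt => e e0.
apply: filterS (u0 e e0) => n un; rewrite normrM; apply: le_lt_trans un.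
by rewrite ler_piMr.
Qed.

End NumFieldPowerSeries.

Section HardyCoefficients.
Context {R : realType}.
Local Notation C := (R[i])^o.

Lemma sqmod_ge0 (z : C) : (0 <= sqmod z)%R.
Proof. by rewrite /sqmod addr_ge0 // sqr_ge0. Qed.

Lemma sqmod0 : sqmod (0 : C) = 0.
Proof. by rewrite /sqmod expr0n /= addr0. Qed.

Lemma sqmodE (z : C) : (sqmod z)%:C%C = `|z| ^+ 2.
Proof. by rewrite /sqmod add_Re2_Im2. Qed.

Lemma H2coef_tail_cvg0 {b : nat -> C} : H2coef b ->
  (\sum_(N <= k <oo) (sqmod (b k))%:E)%E @[N --> \oo] --> 0%E.
Proof.
move=> Hb; apply: (@nneseries_tail_cvg R (fun k => (sqmod (b k))%:E) xpredT) => //.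
by move=> k _; rewrite lee_fin sqmod_ge0.
Qed.

Lemma H2coef_cvg0 {b : nat -> C} : H2coef b -> b @ \oo --> 0.
Proof.
move=> Hb; apply/cvgr0Pnorm_lt => e e0.
have e_real : e \is Num.real by rewrite gtr0_real.
have Re_e0 : (0 < complex.Re e)%R by move: e0; rewrite ltcE => /andP[].
have /fine_cvgP[tail_fin /cvgr0Pnorm_lt tail_small] := H2coef_tail_cvg0 Hb.
apply: filterS2 tail_fin (tail_small _ (exprn_gt0 2 Re_e0)) => N fin_N small_N.
have term_small : (sqmod (b N) < complex.Re e ^+ 2)%R.
  apply: le_lt_trans small_N; apply: le_trans (ler_norm _).
  rewrite -lee_fin /= (fineK fin_N).
  have := @nneseries_lim_ge R (fun k => (sqmod (b k))%:E) xpredT N N.+1.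
  by rewrite big_nat1; apply => k _ _; rewrite lee_fin sqmod_ge0.
rewrite -(ltr_sqr (normr_ge0 _)) ?nnegrE ?ltW // -sqmodE -(RRe_real e_real).
by rewrite -rmorphXn ltcR.
Qed.

(* [rep_coef c zeta b] are the Taylor coefficients of c + (z - zeta) g when
   g has coefficients b. *)
Definition cons_coef (c : C) (b : nat -> C) k : C := if k is k'.+1 then b k' else c.

Definition rep_coef (c zeta : C) (b : nat -> C) k : C := cons_coef c b k - zeta * b k.

Lemma cons_coef_cvg0 (c : C) (b : nat -> C) : b @ \oo --> 0 -> cons_coef c b @ \oo --> 0.
Proof. by move=> b0; rewrite -cvg_shiftS; exact: b0. Qed.

Lemma rep_coef_partial_sum (c zeta z : C) (b : nat -> C) n :
  \sum_(k < n) rep_coef c zeta b k * z ^+ k + cons_coef c b n * z ^+ n =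
  c + (z - zeta) * \sum_(k < n) b k * z ^+ k.
Proof.
elim: n => [|n IHn]; first by rewrite !big_ord0 expr0 mulr1 add0r mulr0 addr0.
by rewrite !big_ord_recr /= mulrDr addrA -IHn /rep_coef /= exprS; ring.
Qed.

Lemma rep_coef_tail_partial_sum (c zeta : C) (b : nat -> C) n M :
  \sum_(j < M.+1) rep_coef c zeta b (n + j) * zeta ^+ j =
  cons_coef c b n - b (M + n)%N * zeta ^+ M.+1.
Proof.
elim: M => [|M IHM].
  by rewrite big_ord_recr big_ord0 /= add0r addn0 /rep_coef expr0 mulr1 expr1; ring.
by rewrite big_ord_recr /= IHM /rep_coef addnS /= [(n + M)%N]addnC addSn !exprS; ring.
Qed.

Lemma cvg_rep_coef_series (c zeta z w : C) (b : nat -> C) :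
  b @ \oo --> 0 -> `|z| <= 1 -> series (fun k => b k * z ^+ k) @ \oo --> w ->
  series (fun k => rep_coef c zeta b k * z ^+ k) @ \oo --> c + (z - zeta) * w.
Proof.
move=> b0 z1 gw.
have -> : series (fun k => rep_coef c zeta b k * z ^+ k) = fun n =>
    c + (z - zeta) * series (fun k => b k * z ^+ k) n - cons_coef c b n * z ^+ n.
  by apply/funext => n; rewrite /series /= !big_mkord -rep_coef_partial_sum addrK.
rewrite -[X in _ --> X]subr0; apply: cvgB.
  exact: cvgD (cvg_cst _) (cvgM (cvg_cst _) gw).
apply: cvg0_mul_norm_le1 => [|n]; first exact: cons_coef_cvg0.
by rewrite normrX exprn_ile1.
Qed.

Lemma cvg_rep_coef_tail (c zeta : C) (b : nat -> C) n :
  b @ \oo --> 0 -> `|zeta| <= 1 ->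
  series (fun j => rep_coef c zeta b (n + j) * zeta ^+ j) @ \oo --> cons_coef c b n.
Proof.
move=> b0 zeta1; rewrite -cvg_shiftS.
have -> : [sequence series (fun j => rep_coef c zeta b (n + j) * zeta ^+ j) M.+1]_M =
    fun M => cons_coef c b n - b (M + n)%N * zeta ^+ M.+1.
  by apply/funext => M; rewrite /series /= big_mkord rep_coef_tail_partial_sum.
have tail0 : (fun M => b (M + n)%N * zeta ^+ M.+1) @ \oo --> 0.
  apply: cvg0_mul_norm_le1 => [|M]; first by rewrite cvg_shiftn; exact: b0.
  by rewrite normrX exprn_ile1.
by have := cvgB (cvg_cst (cons_coef c b n)) tail0; rewrite subr0; apply.
Qed.

Lemma Drep_coefE {zeta : C} {f : C -> C} {c : C} {b a : nat -> C} :
  Drep zeta f c b ->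
  (forall z : C, `|z| < 1 -> series (fun k => a k * z ^+ k) @ \oo --> f z) ->
  a = rep_coef c zeta b.
Proof.
move=> [Hb rep] fa; apply/funext => k; apply/eqP; rewrite -subr_eq0; apply/eqP.
move: k; apply: powser_coef_eq0 => z z1.
have [w [gw fz]] := rep z z1.
have -> : series (fun k => (a k - rep_coef c zeta b k) * z ^+ k) = fun n =>
    series (fun k => a k * z ^+ k) n - series (fun k => rep_coef c zeta b k * z ^+ k) n.
  by apply/funext => n; rewrite /series /= -sumrB; apply: eq_bigr => k _; rewrite mulrBl.
have := cvgB (fa z z1) (cvg_rep_coef_series c zeta z w b (H2coef_cvg0 Hb) (ltW z1) gw).
by rewrite -fz subrr; apply.
Qed.

Definition tail_coef n (b : nat -> C) k : C := if (k < n)%N then 0 else b k.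

Lemma eseries_sqmod_tail_coef n (b : nat -> C) :
  (\sum_(0 <= k <oo) (sqmod (tail_coef n b k))%:E = \sum_(n <= k <oo) (sqmod (b k))%:E)%E.
Proof.
rewrite [RHS]eseries_cond [RHS]eseries_mkcond; apply: eq_eseriesr => k _.
by rewrite /tail_coef /=; case: ltnP => _; rewrite ?sqmod0.
Qed.

Lemma H2coef_tail_coef n (b : nat -> C) : H2coef b -> H2coef (tail_coef n b).
Proof.
rewrite /H2coef eseries_sqmod_tail_coef; apply: le_lt_trans.
rewrite eseries_cond eseries_mkcond.
by apply: lee_nneseries => k _; case: ifP; rewrite lee_fin ?sqmod_ge0.
Qed.

Lemma series_tail_coef n (b : nat -> C) (z : C) N : (n <= N)%N ->
  series (fun k => tail_coef n b k * z ^+ k) N =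
  series (fun k => b k * z ^+ k) N - \sum_(k < n) b k * z ^+ k.
Proof.
move=> nN; rewrite /series /= !(big_cat_nat (leq0n n) nN) /=.
rewrite -(big_mkord xpredT (fun k => b k * z ^+ k)) [RHS]addrAC subrr add0r.
rewrite big_nat_cond big1 ?add0r => [|k /andP[/andP[_ kn] _]]; last first.
  by rewrite /tail_coef kn mul0r.
by apply: eq_big_nat => k /andP[nk _]; rewrite /tail_coef ltnNge nk.
Qed.

Lemma tailsum_rep_coef (c zeta : C) (b : nat -> C) n :
  b @ \oo --> 0 -> `|zeta| <= 1 -> tailsum (rep_coef c zeta b) zeta n = cons_coef c b n.
Proof. by move=> b0 zeta1; apply: cvg_lim; last exact: cvg_rep_coef_tail. Qed.

Lemma Drep_sub_fn {zeta : C} {f : C -> C} {c : C} {b : nat -> C} n :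
  `|zeta| <= 1 -> Drep zeta f c b ->
  Drep zeta (fun z => f z - fn (rep_coef c zeta b) zeta n z) 0 (tail_coef n b).
Proof.
move=> zeta1 [Hb rep]; split; first exact: H2coef_tail_coef.
move=> z z1; have [w [gw fz]] := rep z z1.
exists (w - \sum_(k < n) b k * z ^+ k); split.
  apply: cvg_trans (cvgB gw (cvg_cst _)); apply: near_eq_cvg.
  by exists n => // N /= nN; rewrite series_tail_coef.
rewrite /fn (tailsum_rep_coef c zeta b n (H2coef_cvg0 Hb) zeta1) rep_coef_partial_sum fz.
ring.
Qed.

Lemma Dzeta_ge0 (zeta : C) (f : C -> C) : (0 <= Dzeta zeta f)%E.
Proof.
apply: le_ereal_inf_tmp => _ [b _ <-]; apply: nneseries_ge0 => k _ _.
by rewrite lee_fin sqmod_ge0.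
Qed.

Lemma Dzeta_le {zeta : C} {f : C -> C} {a : C} {b : nat -> C} :
  Drep zeta f a b -> (Dzeta zeta f <= \sum_(0 <= k <oo) (sqmod (b k))%:E)%E.
Proof. by move=> rep; apply: ereal_inf_lbound; exists b => //; exists a. Qed.

End HardyCoefficients.

Theorem corollary2p3 (R : realType) (zeta : (R[i])^o) (f : (R[i])^o -> (R[i])^o)
    (a : nat -> (R[i])^o) :
  `|zeta| <= 1 ->
  in_Dzeta zeta f ->
  (forall z : (R[i])^o, `|z| < 1 -> series (fun k => a k * z ^+ k) @ \oo --> f z) ->
  cvg (series (fun k => a k * zeta ^+ k) @ \oo) /\
  (fun n => Dzeta zeta (fun z => f z - fn a zeta n z)) @ \oo --> 0%E.
Proof.
move=> zeta1 [c [b rep]] fa.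
have b0 := H2coef_cvg0 rep.1.
rewrite (Drep_coefE rep fa); split.
  by apply/cvg_ex; exists (cons_coef c b 0); exact: cvg_rep_coef_tail c zeta b 0 b0 zeta1.
apply: (squeeze_cvge _ (cvg_cst 0%E) (H2coef_tail_cvg0 rep.1)).
apply: nearW => n; rewrite Dzeta_ge0 /= -eseries_sqmod_tail_coef.
exact: Dzeta_le (Drep_sub_fn n zeta1 rep).
Qed.
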